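(* Let $A,B\subset\mathbb{R}^n$ be set-germs at $0$ with $0\in\overline{A}\cap\overline{B}$, and let $h:(\mathbb{R}^n,0)\to(\mathbb{R}^n,0)$ be a bi-Lipschitz homeomorphism (germ). Suppose there are $d>1$ and $C>0$ such that $A\subset ST_d(B;C)$ as germs at $0$. Then $D(h(A))\subset D(h(B))$. Moreover, $D(ST_d(h(A);C'))\subset D(h(B))$ for any $C'>0$.
   Context: A bi-Lipschitz homeomorphism germ is a homeomorphism between neighbourhoods of $0$ fixing $0$ with $K_1|x-y|\le|h(x)-h(y)|\le K_2|x-y|$ for some $0<K_1\le K_2$ near $0$. Sea-tangle neighbourhood: $ST_d(X;C)=\{x\in\mathbb{R}^n : \mathrm{dist}(x,X)\le C|x|^d\}$. ''As germs at $0$'' means after intersecting with some neighbourhood of $0$. Direction set: $D(X)=\{a\in S^{n-1} : \exists\, \{x_i\}\subset X\setminus\{0\},\ x_i\to 0,\ x_i/\|x_i\|\to a\}$. *)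

From HB Require Import structures.
From mathcomp Require Import all_boot all_order all_algebra.
From mathcomp Require Import all_classical all_reals all_analysis.
Set Implicit Arguments. Unset Strict Implicit. Unset Printing Implicit Defensive.
Import Order.TTheory GRing.Theory Num.Theory.
Import numFieldNormedType.Exports.
Local Open Scope classical_set_scope.
Local Open Scope ring_scope.

Section Defs.
Variables (R : realType) (n : nat).
Notation V := 'rV[R]_n.

Definition enorm (x : V) : R := Num.sqrt (\sum_(i < n) (x 0 i) ^+ 2).

Definition edist (x : V) (X : set V) : R := inf [set enorm (x - y) | y in X].

Definition seatangle (d : R) (X : set V) (C : R) : set V :=
  [set x | edist x X <= C * (enorm x) `^ d].

Definition germ_subset (X Y : set V) : Prop :=
  exists r : R, 0 < r /\ X `&` [set x | enorm x < r] `<=` Y.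

Definition usphere : set V := [set a | enorm a = 1].

Definition dirset (X : set V) : set V :=
  [set a | usphere a /\
    exists u : nat -> V,
      (forall i, X (u i) /\ u i != 0) /\
      u @ \oo --> (0 : V) /\
      (fun i => (enorm (u i))^-1 *: u i) @ \oo --> a].

Definition bilip_homeo_germ (h : V -> V) (U W : set V) : Prop :=
  (open U /\ open W /\ U 0 /\ W 0 /\ h 0 = 0) /\
  (h @` U = W) /\
  {within U, continuous h} /\
  (exists g : V -> V,
     (forall x, U x -> g (h x) = x) /\ {within W, continuous g}) /\
  (exists K1 K2 r : R, 0 < K1 /\ K1 <= K2 /\ 0 < r /\
     forall x y, enorm x < r -> enorm y < r ->
       K1 * enorm (x - y) <= enorm (h x - h y) /\
       enorm (h x - h y) <= K2 * enorm (x - y)).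

End Defs.

From Pilot Require Import Defs.
From HB Require Import structures.
From mathcomp Require Import all_boot all_order all_algebra.
From mathcomp Require Import all_classical all_reals all_analysis.
From mathcomp Require Import ring lra.
Import Order.TTheory GRing.Theory Num.Theory.
Import numFieldNormedType.Exports.
Local Open Scope classical_set_scope.
Local Open Scope ring_scope.

(* Call X asymptotically contained in Y ([asymp_subset X Y]) when every sequence
   u of nonzero points of X tending to 0 is shadowed by a sequence v of points of
   Y with |v_i - u_i| = o(|u_i|).  Shadowing sequences have the same limit
   directions, so this gives D(X) ⊆ D(Y); it is also transitive.  Since d > 1, a
   point x of ST_d(Y;C) lies within C|x|^d = o(|x|) of Y, so ST_d(Y;C) is
   asymptotically contained in Y, and hence A ∩ U in B ∩ U (shadows tend to 0,
   so they end up in U).  A bi-Lipschitz germ distorts |v_i - u_i| and |u_i| by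
   bounded factors, so it carries this containment over to the images; the second
   claim follows because ST_d(h(A ∩ U);C') is asymptotically contained in h(A ∩ U). *)

Section EuclideanNorm.
Context {R : realType} {n : nat}.
Implicit Types (x y : 'rV[R]_n) (k : R).

Lemma enorm_ge0 x : 0 <= enorm x.
Proof. exact: sqrtr_ge0. Qed.

Lemma enorm_sqr x : enorm x ^+ 2 = \sum_(i < n) x 0 i ^+ 2.
Proof. by rewrite sqr_sqrtr // sumr_ge0 // => i _; rewrite sqr_ge0. Qed.

Lemma enormZ k x : enorm (k *: x) = `|k| * enorm x.
Proof.
rewrite /enorm -sqrtr_sqr -sqrtrM ?sqr_ge0 // mulr_sumr.
by congr Num.sqrt; apply: eq_bigr => i _; rewrite mxE exprMn.
Qed.

Lemma enormN x : enorm (- x) = enorm x.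
Proof. by rewrite -scaleN1r enormZ normrN normr1 mul1r. Qed.

Lemma enorm0 : enorm (0 : 'rV[R]_n) = 0.
Proof. by rewrite -(scale0r 0) enormZ normr0 mul0r. Qed.

Lemma enorm_eq0 x : (enorm x == 0) = (x == 0).
Proof.
apply/eqP/eqP => [x0|->]; last exact: enorm0.
have /psumr_eq0P x2_eq0 : \sum_(i < n) x 0 i ^+ 2 = 0 by rewrite -enorm_sqr x0 expr0n.
apply/rowP => j; apply/eqP; rewrite mxE -sqrf_eq0.
by apply/eqP/x2_eq0 => // i _; rewrite sqr_ge0.
Qed.

Lemma enorm_gt0 x : (0 < enorm x) = (x != 0).
Proof. by rewrite lt_neqAle enorm_ge0 andbT eq_sym enorm_eq0. Qed.

Lemma dot_le_enorm x y : \sum_(i < n) x 0 i * y 0 i <= enorm x * enorm y.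
Proof.
have [->|x0] := eqVneq x 0.
  by rewrite enorm0 mul0r big1 // => i _; rewrite mxE mul0r.
have [->|y0] := eqVneq y 0.
  by rewrite enorm0 mulr0 big1 // => i _; rewrite mxE mulr0.
set a := enorm x; set b := enorm y.
have a_gt0 : 0 < a by rewrite enorm_gt0.
have b_gt0 : 0 < b by rewrite enorm_gt0.
have : \sum_(i < n) 2 * (a * b) * (x 0 i * y 0 i) <=
       \sum_(i < n) (b ^+ 2 * x 0 i ^+ 2 + a ^+ 2 * y 0 i ^+ 2).
  by apply: ler_sum => i _; have := sqr_ge0 (b * x 0 i - a * y 0 i); nra.
rewrite -mulr_sumr big_split /= -!mulr_sumr -!enorm_sqr -/a -/b.
have -> : b ^+ 2 * a ^+ 2 + a ^+ 2 * b ^+ 2 = 2 * (a * b) * (a * b) by ring.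
by rewrite ler_pM2l // mulr_gt0 // mulr_gt0.
Qed.

Lemma enormD x y : enorm (x + y) <= enorm x + enorm y.
Proof.
rewrite -ler_sqr ?nnegrE ?addr_ge0 ?enorm_ge0 //.
have -> : (enorm x + enorm y) ^+ 2 = enorm x ^+ 2 + 2 * (enorm x * enorm y) + enorm y ^+ 2.
  by ring.
have -> : enorm (x + y) ^+ 2 =
    enorm x ^+ 2 + 2 * \sum_(i < n) x 0 i * y 0 i + enorm y ^+ 2.
  rewrite !enorm_sqr mulr_sumr -!big_split /=.
  by apply: eq_bigr => i _; rewrite mxE; ring.
by have := dot_le_enorm x y; lra.
Qed.

Lemma enorm_distC x y : enorm (x - y) = enorm (y - x).
Proof. by rewrite -enormN opprB. Qed.

Lemma enorm_le_dist x y : enorm x <= enorm y + enorm (x - y).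
Proof. by rewrite -[x in enorm x](subrK y) addrC enormD. Qed.

Lemma ler_enorm_dist x y : `|enorm x - enorm y| <= enorm (x - y).
Proof.
have := enorm_le_dist x y; have := enorm_le_dist y x; rewrite enorm_distC.
by rewrite ler_norml; lra.
Qed.

Lemma normr_le_enorm x : `|x| <= enorm x.
Proof.
rewrite [`|x|]mx_normrE; apply: bigmax_le => [|[i j] _]; first exact: enorm_ge0.
rewrite /= (ord1 i) -ler_sqr ?nnegrE ?enorm_ge0 // enorm_sqr real_normK ?num_real //.
by rewrite (bigD1 j) //= lerDl sumr_ge0 // => k _; rewrite sqr_ge0.
Qed.

Lemma enorm_le_normr x : enorm x <= n%:R * `|x|.
Proof.
have coord_le j : `|x 0 j| <= `|x|.
  by rewrite [`|x|]mx_normrE; apply: (le_bigmax _ (fun ij => `|x ij.1 ij.2|) (0, j)).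
rewrite -ler_sqr ?nnegrE ?mulr_ge0 ?enorm_ge0 // enorm_sqr.
apply: (@le_trans _ _ (\sum_(i < n) `|x| ^+ 2)).
  by apply: ler_sum => i _; rewrite -real_normK ?num_real // lerXn2r ?nnegrE.
rewrite sumr_const card_ord -[_ *+ n]mulr_natl exprMn.
apply: ler_wpM2r; first exact: sqr_ge0.
by rewrite -natrX ler_nat; case: n {x coord_le} => // m; rewrite expnS leq_pmulr ?expn_gt0.
Qed.

End EuclideanNorm.

Section AsymptoticEquivalence.
Local Set Implicit Arguments.
Context {R : realType} {n : nat}.
Local Notation V := 'rV[R]_n.
Implicit Types (u v w : nat -> V) (x y a : V).

Lemma cvg_enormP u a : u @ \oo --> a <->
  forall eps, 0 < eps -> \forall i \near \oo, enorm (u i - a) < eps.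
Proof.
rewrite cvgrPdist_lt; split => u_a eps eps_gt0; near=> i.
  have n1_gt0 : 0 < n%:R + 1 :> R by rewrite ltr_wpDl.
  have : `|u i - a| < eps / (n%:R + 1).
    by rewrite distrC; near: i; apply: u_a; rewrite divr_gt0.
  rewrite ltr_pdivlMr // => lt_eps.
  have := enorm_le_normr (u i - a); have := normr_ge0 (u i - a); have := ler0n R n.
  nra.
rewrite distrC (le_lt_trans (normr_le_enorm _)) //.
by near: i; exact: u_a.
Unshelve. all: by end_near. Qed.

Definition direction x : V := (enorm x)^-1 *: x.

Lemma enorm_direction_sub x y : x != 0 ->
  enorm (direction y - direction x) <= 2 * enorm (y - x) / enorm x.
Proof.
move=> x0; have x_gt0 : 0 < enorm x by rewrite enorm_gt0.
have [->|y0] := eqVneq y 0.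
  rewrite /direction enorm0 invr0 !scale0r !sub0r !enormN enormZ gtr0_norm ?invr_gt0 //.
  by rewrite mulVf ?gt_eqF // -mulrA divff ?gt_eqF // mulr1 ler1n.
have y_gt0 : 0 < enorm y by rewrite enorm_gt0.
have -> : direction y - direction x =
    (enorm x)^-1 *: (y - x) + ((enorm y)^-1 - (enorm x)^-1) *: y.
  by apply/rowP => j; rewrite !mxE; ring.
apply: (le_trans (enormD _ _)); rewrite !enormZ.
have -> : `|(enorm y)^-1 - (enorm x)^-1| * enorm y = `|enorm x - enorm y| / enorm x.
  rewrite -[X in _ * X = _]gtr0_norm // -normrM.
  have -> : ((enorm y)^-1 - (enorm x)^-1) * enorm y = (enorm x - enorm y) / enorm x.
    by field; rewrite !gt_eqF.
  by rewrite normrM [`|_^-1|]gtr0_norm ?invr_gt0.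
rewrite gtr0_norm ?invr_gt0 // mulrC -mulrDl ler_pM2r ?invr_gt0 //.
by have := ler_enorm_dist x y; rewrite enorm_distC; lra.
Qed.

Definition asymp_equiv u v :=
  forall eps, 0 < eps -> \forall i \near \oo, enorm (v i - u i) <= eps * enorm (u i).

Lemma asymp_equiv_refl u : asymp_equiv u u.
Proof.
move=> eps eps_gt0; apply: nearW => i.
by rewrite subrr enorm0 mulr_ge0 ?enorm_ge0 ?ltW.
Qed.

Lemma asymp_equiv_enorm u v : asymp_equiv u v ->
  \forall i \near \oo, enorm (v i) <= 2 * enorm (u i) /\ enorm (u i) <= 2 * enorm (v i).
Proof.
move=> uv; near=> i.
have : enorm (v i - u i) <= 2^-1 * enorm (u i) by near: i; apply: uv.
have := enorm_le_dist (v i) (u i); have := enorm_le_dist (u i) (v i).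
by rewrite enorm_distC; lra.
Unshelve. all: by end_near. Qed.

Lemma asymp_equiv_neq0 u v : (\forall i \near \oo, u i != 0) -> asymp_equiv u v ->
  \forall i \near \oo, v i != 0.
Proof.
move=> u_neq0 /asymp_equiv_enorm uv; near=> i.
have [_ u_le] : enorm (v i) <= 2 * enorm (u i) /\ enorm (u i) <= 2 * enorm (v i).
  by near: i.
have : 0 < enorm (u i) by rewrite enorm_gt0; near: i.
by rewrite -enorm_gt0; lra.
Unshelve. all: by end_near. Qed.

Lemma asymp_equiv_cvg0 u v : u @ \oo --> (0 : V) -> asymp_equiv u v -> v @ \oo --> (0 : V).
Proof.
move=> /cvg_enormP u0 /asymp_equiv_enorm uv; apply/cvg_enormP => eps eps_gt0.
near=> i; rewrite subr0.
have [v_le _] : enorm (v i) <= 2 * enorm (u i) /\ enorm (u i) <= 2 * enorm (v i).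
  by near: i.
have : enorm (u i - 0) < eps / 2 by near: i; apply: u0; rewrite divr_gt0.
by rewrite subr0; lra.
Unshelve. all: by end_near. Qed.

Lemma asymp_equiv_trans w u v : asymp_equiv u w -> asymp_equiv w v -> asymp_equiv u v.
Proof.
move=> uw wv eps eps_gt0; have e3_gt0 : 0 < eps / 3 by rewrite divr_gt0.
near=> i.
have uw_le : enorm (w i - u i) <= eps / 3 * enorm (u i) by near: i; apply: uw.
have wv_le : enorm (v i - w i) <= eps / 3 * enorm (w i) by near: i; apply: wv.
have uw_le1 : enorm (w i - u i) <= 1 * enorm (u i) by near: i; apply: uw.
have := enorm_le_dist (w i) (u i); have := enorm_ge0 (u i).
have : enorm (v i - u i) <= enorm (v i - w i) + enorm (w i - u i).
  by rewrite -[v i - u i](subrKA (w i)) enormD.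
nra.
Unshelve. all: by end_near. Qed.

Lemma asymp_equiv_direction u v a : (\forall i \near \oo, u i != 0) ->
  asymp_equiv u v -> direction \o u @ \oo --> a -> direction \o v @ \oo --> a.
Proof.
move=> u_neq0 uv /cvg_enormP du_a; apply/cvg_enormP => eps eps_gt0.
near=> i.
have ui_neq0 : u i != 0 by near: i.
have ui_gt0 : 0 < enorm (u i) by rewrite enorm_gt0.
have du_near : enorm (direction (u i) - a) < eps / 2.
  by near: i; apply: du_a; rewrite divr_gt0.
have uv_le : enorm (v i - u i) <= eps / 4 * enorm (u i).
  by near: i; apply: uv; rewrite divr_gt0.
have dv_du : enorm (direction (v i) - direction (u i)) <= eps / 2.
  apply: le_trans (enorm_direction_sub (u i) (v i) ui_neq0) _.
  by rewrite ler_pdivrMr //; lra.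
have := enorm_le_dist (direction (v i) - a) (direction (u i) - a).
by rewrite opprB addrA subrK; lra.
Unshelve. all: by end_near. Qed.

End AsymptoticEquivalence.

Section AsymptoticInclusion.
Local Set Implicit Arguments.
Context {R : realType} {n : nat}.
Local Notation V := 'rV[R]_n.
Implicit Types (u v : nat -> V) (a : V) (X Y Z U : set V).

Definition asymp_subset X Y := forall u,
  (\forall i \near \oo, X (u i) /\ u i != 0) -> u @ \oo --> (0 : V) ->
  exists2 v, (\forall i \near \oo, Y (v i)) & asymp_equiv u v.

Lemma dirset_near X v a : usphere a ->
  (\forall i \near \oo, X (v i) /\ v i != 0) -> v @ \oo --> (0 : V) ->
  direction \o v @ \oo --> a -> dirset X a.
Proof.
move=> a1 [N _ Xv] v0 dv; split => //; exists (fun i => v (i + N)%N).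
split; first by move=> i; apply: Xv; rewrite /= leq_addl.
by rewrite -(cvg_shiftn N v) -(cvg_shiftn N (direction \o v)) in v0 dv.
Qed.

Lemma dirset_asymp_subset X Y : asymp_subset X Y -> dirset X `<=` dirset Y.
Proof.
move=> XY a [a1 [u [Xu [u0 du]]]].
have Xu_near : \forall i \near \oo, X (u i) /\ u i != 0 by exact: nearW.
have [v Yv uv] := XY u Xu_near u0.
have u_neq0 : \forall i \near \oo, u i != 0 by apply: nearW => i; case: (Xu i).
apply: (dirset_near Y a1 _ (asymp_equiv_cvg0 u0 uv) (asymp_equiv_direction u_neq0 uv du)).
by apply: filterS2 Yv (asymp_equiv_neq0 u_neq0 uv) => i.
Qed.

Lemma asymp_subset_trans Y X Z : asymp_subset X Y -> asymp_subset Y Z -> asymp_subset X Z.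
Proof.
move=> XY YZ u Xu u0; have [w Yw uw] := XY u Xu u0.
have u_neq0 : \forall i \near \oo, u i != 0 by apply: filterS Xu => i [].
have Yw_near : \forall i \near \oo, Y (w i) /\ w i != 0.
  by apply: filterS2 Yw (asymp_equiv_neq0 u_neq0 uw) => i.
have [v Zv wv] := YZ w Yw_near (asymp_equiv_cvg0 u0 uw).
by exists v => //; exact: asymp_equiv_trans uw wv.
Qed.

Lemma asymp_subsetSl X' X Y : X' `<=` X -> asymp_subset X Y -> asymp_subset X' Y.
Proof. by move=> X'X XY u X'u; apply: XY; apply: filterS X'u => i [/X'X]. Qed.

Lemma germ_asymp_subset X Y : germ_subset X Y -> asymp_subset X Y.
Proof.
move=> [r [r_gt0 XY]] u Xu /cvg_enormP u0; exists u; last exact: asymp_equiv_refl.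
by apply: filterS2 Xu (u0 r r_gt0) => i [Xui _]; rewrite subr0 => ui_lt; exact: XY.
Qed.

Lemma asymp_subsetI_nbhs U X Y : nbhs (0 : V) U ->
  asymp_subset X Y -> asymp_subset X (Y `&` U).
Proof.
move=> U0 XY u Xu u0; have [v Yv uv] := XY u Xu u0.
have Uv : \forall i \near \oo, U (v i) := asymp_equiv_cvg0 u0 uv U0.
by exists v => //; apply: filterS2 Yv Uv.
Qed.

End AsymptoticInclusion.

Lemma powR_le_mul {R : realType} {d K eps : R} : 1 < d -> 0 <= K -> 0 < eps ->
  exists2 delta, 0 < delta & forall t, 0 <= t -> t < delta -> K * t `^ d <= eps * t.
Proof.
move=> d_gt1 K_ge0 eps_gt0.
have d1_gt0 : 0 < d - 1 by rewrite subr_gt0.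
set c := eps / (K + 1).
have c_gt0 : 0 < c by rewrite divr_gt0 // ltr_wpDl.
exists (c `^ (d - 1)^-1) => [|t t_ge0 t_lt]; first exact: powR_gt0.
have tpow_le : t `^ (d - 1) <= c.
  have c_eq : (c `^ (d - 1)^-1) `^ (d - 1) = c.
    by rewrite -powRrM mulVf ?gt_eqF // powRr1 // ltW.
  rewrite -[leRHS]c_eq.
  apply: (ge0_ler_powR (ltW d1_gt0)); rewrite ?nnegrE ?powR_ge0 //; exact: ltW.
have Kc_le : K * c <= eps.
  by rewrite /c mulrCA ger_pMr // ler_pdivrMr ?ltr_wpDl // mul1r lerDl.
rewrite -(mulr_powRB1 t_ge0 (lt_trans ltr01 d_gt1)) mulrCA [eps * t]mulrC.
exact/(ler_wpM2l t_ge0)/(le_trans (ler_wpM2l K_ge0 tpow_le) Kc_le).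
Qed.

Section SeaTangle.
Local Set Implicit Arguments.
Context {R : realType} {n : nat}.
Local Notation V := 'rV[R]_n.
Implicit Types (X : set V) (x : V) (d C : R).

Lemma exists_edist_lt X x (s : R) : X !=set0 -> 0 < s ->
  exists2 y, X y & enorm (x - y) < Defs.edist x X + s.
Proof.
move=> [y0 Xy0] s_gt0.
have inf_X : has_inf [set enorm (x - y) | y in X].
  split; first by exists (enorm (x - y0)), y0.
  by exists 0 => _ [y _ <-]; exact: enorm_ge0.
by have [_ [y Xy <-]] := inf_adherent s_gt0 inf_X; exists y.
Qed.

Lemma seatangle_witness d C X x : X !=set0 -> seatangle d X C x -> x != 0 ->
  exists2 y, X y & enorm (x - y) <= (C + 1) * enorm x `^ d.
Proof.
move=> X_ne STx x_neq0.
have p_gt0 : 0 < enorm x `^ d by rewrite powR_gt0 // enorm_gt0.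
have [y Xy xy] := exists_edist_lt x _ X_ne p_gt0.
by exists y => //; rewrite /seatangle /= in STx; lra.
Qed.

Lemma asymp_subset_seatangle d C X : 1 < d -> 0 < C -> X !=set0 ->
  asymp_subset (seatangle d X C) X.
Proof.
move=> d_gt1 C_gt0 X_ne u STu /cvg_enormP u0.
have /choice[v Xv] : forall i, exists y, seatangle d X C (u i) -> u i != 0 ->
    X y /\ enorm (u i - y) <= (C + 1) * enorm (u i) `^ d.
  move=> i; have [[STui ui_neq0]|not_ST] := pselect (seatangle d X C (u i) /\ u i != 0).
    by have [y Xy uy] := seatangle_witness X_ne STui ui_neq0; exists y.
  by exists 0 => STui ui_neq0; exfalso; apply: not_ST.
exists v; first by apply: filterS STu => i [STui /(Xv i STui)[]].
move=> eps eps_gt0.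
have [delta delta_gt0 pow_le] := powR_le_mul d_gt1 (addr_ge0 (ltW C_gt0) ler01) eps_gt0.
near=> i.
have [STui ui_neq0] : seatangle d X C (u i) /\ u i != 0 by near: i.
have [_ uv] := Xv i STui ui_neq0.
rewrite enorm_distC (le_trans uv) // pow_le ?enorm_ge0 //.
by rewrite -[u i]subr0; near: i; exact: u0.
Unshelve. all: by end_near. Qed.

End SeaTangle.

Section BiLipschitzImage.
Local Set Implicit Arguments.
Context {R : realType} {n : nat}.
Local Notation V := 'rV[R]_n.

Definition bilipschitz_on_ball (f : V -> V) (K1 K2 r : R) :=
  forall x y, enorm x < r -> enorm y < r ->
    K1 * enorm (x - y) <= enorm (f x - f y) /\ enorm (f x - f y) <= K2 * enorm (x - y).

Lemma asymp_equiv_bilipschitz f K1 K2 r (x y : nat -> V) :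
  0 < K1 -> 0 < K2 -> 0 < r -> f 0 = 0 -> bilipschitz_on_ball f K1 K2 r ->
  x @ \oo --> (0 : V) -> asymp_equiv x y -> asymp_equiv (f \o x) (f \o y).
Proof.
move=> K1_gt0 K2_gt0 r_gt0 f0 lip x0 xy eps eps_gt0 /=.
have /cvg_enormP y0 := asymp_equiv_cvg0 x0 xy; move/cvg_enormP: x0 => x0.
near=> i.
have xi_lt : enorm (x i) < r by rewrite -[x i]subr0; near: i; exact: x0.
have yi_lt : enorm (y i) < r by rewrite -[y i]subr0; near: i; exact: y0.
have xy_le : enorm (y i - x i) <= eps * K1 / K2 * enorm (x i).
  by near: i; apply: xy; rewrite divr_gt0 ?mulr_gt0.
have [_ fxy_le] := lip (y i) (x i) yi_lt xi_lt.
have r0 : enorm (0 : V) < r by rewrite enorm0.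
have [fx_ge _] := lip (x i) 0 xi_lt r0.
rewrite f0 !subr0 in fx_ge.
apply: le_trans fxy_le _; apply: le_trans (ler_wpM2l (ltW K2_gt0) xy_le) _.
have -> : K2 * (eps * K1 / K2 * enorm (x i)) = eps * (K1 * enorm (x i)).
  by field; rewrite gt_eqF.
by rewrite ler_pM2l.
Unshelve. all: by end_near. Qed.

Lemma asymp_subset_bilip_image h (U W X Y : set V) : bilip_homeo_germ h U W ->
  X `<=` U -> asymp_subset X Y -> asymp_subset (h @` X) (h @` Y).
Proof.
move=> [[_ [oW [U0 [W0 h0]]]] [_ [_ [[g [gh gc]] [K1 [K2 [r [K1_gt0 [K12 [r_gt0 lip]]]]]]]]]].
move=> XU XY u hXu u0.
have /choice[x hx] : forall i, exists y, (h @` X) (u i) -> X y /\ h y = u i.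
  move=> i; have [[y Xy <-]|not_hX] := pselect ((h @` X) (u i)); first by exists y.
  by exists 0 => /not_hX.
have x_near : \forall i \near \oo, (X (x i) /\ h (x i) = u i) /\ u i != 0.
  by apply: filterS hXu => i [/hx].
have x0 : x @ \oo --> (0 : V).
  have g0 : g 0 = 0 by rewrite -{1}h0 gh.
  have g_cont0 : {for 0, continuous g}.
    by move: gc; rewrite continuous_open_subspace // => /(_ 0 (mem_set W0)).
  rewrite -g0; apply: cvg_trans (cvg_comp _ _ u0 g_cont0).
  by apply: near_eq_cvg; apply: filterS x_near => i [[/XU Uxi hxi] _]; rewrite /= -hxi gh.
have Xx : \forall i \near \oo, X (x i) /\ x i != 0.
  apply: filterS x_near => i [[Xxi hxi] ui_neq0]; split => //.
  by apply: contraNneq ui_neq0 => xi0; rewrite -hxi xi0 h0.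
have [y Yy xy] := XY x Xx x0.
exists (h \o y); first by apply: filterS Yy => i Yyi; exists (y i).
have K2_gt0 := lt_le_trans K1_gt0 K12.
move=> eps /(asymp_equiv_bilipschitz K1_gt0 K2_gt0 r_gt0 h0 lip x0 xy) hxy.
by apply: filterS2 x_near hxy => i [[_ /= ->] _].
Qed.

End BiLipschitzImage.

Theorem lemma4p9 (R : realType) (n : nat) (A B : set 'rV[R]_n)
    (h : 'rV[R]_n -> 'rV[R]_n) (U W : set 'rV[R]_n) (d C : R) :
  closure A 0 -> closure B 0 ->
  bilip_homeo_germ h U W ->
  1 < d -> 0 < C ->
  germ_subset A (seatangle d B C) ->
  dirset (h @` (A `&` U)) `<=` dirset (h @` (B `&` U)) /\
  (forall C' : R, 0 < C' ->
     dirset (seatangle d (h @` (A `&` U)) C') `<=` dirset (h @` (B `&` U))).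
Proof.
move=> A0 B0 hh d_gt1 C_gt0 AB.
have U0 : nbhs (0 : 'rV[R]_n) U.
  by have [[oU [_ [U0 _]]] _] := hh; apply: open_nbhs_nbhs.
have B_ne : B !=set0 by have [b [Bb _]] := B0 setT filterT; exists b.
have hA_ne : h @` (A `&` U) !=set0 by have [a AUa] := A0 U U0; exists (h a), a.
have AUB : asymp_subset (A `&` U) (B `&` U).
  apply: asymp_subsetI_nbhs U0 _.
  apply: asymp_subset_trans (asymp_subset_seatangle d_gt1 C_gt0 B_ne).
  exact: asymp_subsetSl (@subIsetl _ A U) (germ_asymp_subset AB).
have hAB := asymp_subset_bilip_image hh (@subIsetr _ A U) AUB.
split; first exact: dirset_asymp_subset.
move=> C' C'_gt0; apply: dirset_asymp_subset (asymp_subset_trans _ hAB).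
exact: asymp_subset_seatangle.
Qed.
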